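(* For $n\ge2$, the number of permutations of $\{1,\dots,n\}$ that avoid both $1243$ and $1324$ and in which entry $1$ appears to the left of entry $n$ (in one-line notation) equals \[ \binom{2n-3}{n-1}. \]
   Context: A permutation avoids a pattern $p$ if no subsequence of its one-line notation is order-isomorphic to $p$. *)

From mathcomp Require Import all_boot all_order all_fingroup.
Set Implicit Arguments. Unset Strict Implicit. Unset Printing Implicit Defensive.

(* Permutations of {1..n} are modelled as {perm 'I_n} (values 0..n-1);
   one-line notation: position i (0-based) holds value s i. *)

Definition contains_pat (n : nat) (s : {perm 'I_n}) (p : seq nat) : bool :=
  [exists f : {ffun 'I_(size p) -> 'I_n},
    [forall a : 'I_(size p), forall b : 'I_(size p),
       ((a < b)%N ==> (f a < f b)%N) &&
       ((s (f a) < s (f b))%N == (nth 0 p a < nth 0 p b)%N)]].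

Definition avoids (n : nat) (s : {perm 'I_n}) (p : seq nat) : bool :=
  ~~ contains_pat s p.

Definition pos (n : nat) (s : {perm 'I_n}) (v : 'I_n) : nat := (s^-1)%g v.

From mathcomp Require Import all_boot all_order all_fingroup zify.
Set Implicit Arguments. Unset Strict Implicit. Unset Printing Implicit Defensive.

(* A permutation of {0, ..., m} is grown from a permutation u of {0, ..., m-1} by
   prepending a first entry x, shifting up the entries >= x of u.  This keeps
   1243 and 1324 avoided iff u has no 132 and no 213 formed by entries >= x;
   these active sites x form an interval [m - l, m], where l = nactive u.
   For the permutations with 0 before the maximum, the site x = m is lost, the
   sites 0 < x < m give children whose labels l run exactly over 2, ..., l + 1,
   and the site x = 0 turns each of the 2 ^ (m - 1) permutations of length m
   with all sites active into a new node of label m.  The level sizes of this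
   generating tree are ballot numbers, and summing them gives the binomial. *)

Fixpoint has2 (P : nat -> nat -> bool) (s : seq nat) : bool :=
  if s is x :: s' then has (P x) s' || has2 P s' else false.

Fixpoint has3 (P : nat -> nat -> nat -> bool) (s : seq nat) : bool :=
  if s is x :: s' then has2 (P x) s' || has3 P s' else false.

Fixpoint has4 (P : nat -> nat -> nat -> nat -> bool) (s : seq nat) : bool :=
  if s is x :: s' then has3 (P x) s' || has4 P s' else false.

Lemma sub_has2 (P P' : nat -> nat -> bool) s :
  (forall a b, P a b -> P' a b) -> has2 P s -> has2 P' s.
Proof.
move=> PP'; elim: s => //= x s IH /orP[/hasP[y ys Pxy]|/IH ->]; last by rewrite orbT.
by apply/orP; left; apply/hasP; exists y => //; apply: PP'.
Qed.

Lemma sub_has3 (P P' : nat -> nat -> nat -> bool) s :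
  (forall a b c, P a b c -> P' a b c) -> has3 P s -> has3 P' s.
Proof.
move=> PP'; elim: s => //= x s IH /orP[/(sub_has2 (PP' x)) -> //|/IH ->].
by rewrite orbT.
Qed.

Lemma sub_has4 (P P' : nat -> nat -> nat -> nat -> bool) s :
  (forall a b c d, P a b c d -> P' a b c d) -> has4 P s -> has4 P' s.
Proof.
move=> PP'; elim: s => //= x s IH /orP[/(sub_has3 (PP' x)) -> //|/IH ->].
by rewrite orbT.
Qed.

Lemma eq_has2 (P P' : nat -> nat -> bool) s :
  (forall a b, P a b = P' a b) -> has2 P s = has2 P' s.
Proof. by move=> PP'; apply/idP/idP; apply: sub_has2 => a b; rewrite PP'. Qed.

Lemma eq_has3 (P P' : nat -> nat -> nat -> bool) s :
  (forall a b c, P a b c = P' a b c) -> has3 P s = has3 P' s.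
Proof. by move=> PP'; apply/idP/idP; apply: sub_has3 => a b c; rewrite PP'. Qed.

Lemma eq_has4 (P P' : nat -> nat -> nat -> nat -> bool) s :
  (forall a b c d, P a b c d = P' a b c d) -> has4 P s = has4 P' s.
Proof. by move=> PP'; apply/idP/idP; apply: sub_has4 => a b c d; rewrite PP'. Qed.

Lemma has2_map (P : nat -> nat -> bool) f s :
  has2 P (map f s) = has2 (fun a b => P (f a) (f b)) s.
Proof. by elim: s => //= x s ->; rewrite has_map. Qed.

Lemma has3_map (P : nat -> nat -> nat -> bool) f s :
  has3 P (map f s) = has3 (fun a b c => P (f a) (f b) (f c)) s.
Proof. by elim: s => //= x s ->; rewrite has2_map. Qed.

Lemma has4_map (P : nat -> nat -> nat -> nat -> bool) f s :
  has4 P (map f s) = has4 (fun a b c d => P (f a) (f b) (f c) (f d)) s.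
Proof. by elim: s => //= x s ->; rewrite has3_map. Qed.

Lemma has2_pred0 s : has2 (fun _ _ => false) s = false.
Proof. by elim: s => //= x s ->; rewrite has_pred0. Qed.

Lemma has2P (P : nat -> nat -> bool) s :
  reflect (exists a b, [/\ a < b, b < size s & P (nth 0 s a) (nth 0 s b)])
          (has2 P s).
Proof.
elim: s => [|x s IH] /=; first by right=> -[a [b []]].
apply: (iffP orP) => [[/hasP[y /(nthP 0)[j js <-] Pxy]|/IH[a [b [ab bs Pab]]]]|].
- by exists 0, j.+1.
- by exists a.+1, b.+1.
case=> [[|a] [[|b] [//= ab bs Pab]]].
  by left; apply/hasP; exists (nth 0 s b) => //; apply: mem_nth.
by right; apply/IH; exists a, b.
Qed.

Lemma has3P (P : nat -> nat -> nat -> bool) s :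
  reflect (exists a b c, [/\ a < b, b < c, c < size s &
             P (nth 0 s a) (nth 0 s b) (nth 0 s c)]) (has3 P s).
Proof.
elim: s => [|x s IH] /=; first by right=> -[a [b [c []]]].
apply: (iffP orP) => [[/has2P[b [c [bc cs Pbc]]]|/IH[a [b [c [ab bc cs Pabc]]]]]|].
- by exists 0, b.+1, c.+1.
- by exists a.+1, b.+1, c.+1.
case=> [[|a] [[|b] [[|c] [//= ab bc cs Pabc]]]].
  by left; apply/has2P; exists b, c.
by right; apply/IH; exists a, b, c.
Qed.

Lemma has4P (P : nat -> nat -> nat -> nat -> bool) s :
  reflect (exists a b c d, [/\ a < b, b < c, c < d, d < size s &
             P (nth 0 s a) (nth 0 s b) (nth 0 s c) (nth 0 s d)]) (has4 P s).
Proof.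
elim: s => [|x s IH] /=; first by right=> -[a [b [c [d []]]]].
apply: (iffP orP) => [[/has3P[b [c [d [bc cd ds P4]]]]|/IH[a [b [c [d [ab bc cd ds P4]]]]]]|].
- by exists 0, b.+1, c.+1, d.+1.
- by exists a.+1, b.+1, c.+1, d.+1.
case=> [[|a] [[|b] [[|c] [[|d] [//= ab bc cd ds P4]]]]].
  by left; apply/has3P; exists b, c, d.
by right; apply/IH; exists a, b, c, d.
Qed.

Lemma upclosedE (P : pred nat) a n :
  (forall y, a <= y -> P y -> P y.+1) ->
  forall y, a <= y < a + n -> P y = (a + n - count P (iota a n) <= y).
Proof.
elim: n a => [|n IH] a P_up y; first by lia.
rewrite /= => y_range.
case Pa: (P a).
  have P_ge z : a <= z -> P z.
    elim: z => [|z IHz]; first by rewrite leqn0 => /eqP <-.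
    rewrite leq_eqVlt => /predU1P[<- // | az].
    by apply: P_up (IHz az); rewrite -ltnS.
  rewrite P_ge; last lia.
  rewrite (eq_in_count (a2 := predT)) ?count_predT ?size_iota; first lia.
  by move=> z; rewrite mem_iota => /andP[az _]; apply: P_ge; lia.
have [-> | ya] := eqVneq y a.
  by have := count_size P (iota a.+1 n); rewrite size_iota Pa; lia.
rewrite (IH a.+1) => [|z az|]; [by apply/idP/idP; lia | by apply: P_up; lia | lia].
Qed.

Lemma filter_iota_geq g a n :
  [seq y <- iota a n | g <= y] = iota (maxn a g) (a + n - maxn a g).
Proof.
elim: n a => [|n IH] a /=; first by have -> : a + 0 - maxn a g = 0 by lia.
rewrite IH; case: leqP => [ga | ag].
  have -> : maxn a.+1 g = a.+1 by lia.
  by have -> : a + n.+1 - a = (a.+1 + n - a.+1).+1 by lia.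
have -> : maxn a.+1 g = g by lia.
by have -> : a.+1 + n = a + n.+1 by lia.
Qed.

Lemma big_iota_inj (R : Type) (idx : R) (op : Monoid.com_law idx) (F : nat -> R)
    (f : nat -> nat) a b n :
  {in iota a n &, injective f} -> {in iota a n, forall x, f x \in iota b n} ->
  \big[op/idx]_(x <- iota a n) F (f x) = \big[op/idx]_(y <- iota b n) F y.
Proof.
move=> f_inj f_into; rewrite -(big_map f xpredT F); apply: perm_big.
have f_uniq : uniq (map f (iota a n)) by rewrite map_inj_in_uniq ?iota_uniq.
apply: uniq_perm; rewrite ?iota_uniq //.
case: (uniq_min_size f_uniq (s2 := iota b n)) => [_ /mapP[x x_in ->]||//].
  exact: f_into.
by rewrite size_map !size_iota.
Qed.

Lemma sum_b2n (T : Type) (s : seq T) (P : pred T) : \sum_(x <- s) (P x : nat) = count P s.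
Proof. by rewrite -sum1_count [RHS]big_mkcond; apply: eq_bigr => x _; case: (P x). Qed.

(** * Prepending a first entry *)

Definition like1243 (a b c d : nat) : bool := [&& a < b, b < d & d < c].
Definition like1324 (a b c d : nat) : bool := [&& a < c, c < b & b < d].
Definition like132_ge (y a b c : nat) : bool := [&& y <= a, a < c & c < b].
Definition like213_ge (y a b c : nat) : bool := [&& y <= b, b < a & a < c].

Definition av (w : seq nat) : bool := ~~ has4 like1243 w && ~~ has4 like1324 w.

Definition active (y : nat) (u : seq nat) : bool :=
  ~~ has3 (like132_ge y) u && ~~ has3 (like213_ge y) u.

Definition incr_ge (x : nat) (u : seq nat) : bool :=
  ~~ has2 (fun a b => x <= b < a) u.

Definition high_first (y x : nat) (u : seq nat) : bool :=
  ~~ has2 (fun a b => [&& y <= a, a < x & x <= b]) u.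

Definition prepend (x : nat) (u : seq nat) : seq nat := x :: map (bump x) u.

Lemma av_prepend x u : av (prepend x u) = av u && active x u.
Proof.
rewrite /av /active /= !has4_map !has3_map.
rewrite (@eq_has4 (fun a b c d => like1243 (bump x a) (bump x b) (bump x c) (bump x d))
  like1243); last by move=> *; rewrite /like1243 /bump; lia.
rewrite (@eq_has4 (fun a b c d => like1324 (bump x a) (bump x b) (bump x c) (bump x d))
  like1324); last by move=> *; rewrite /like1324 /bump; lia.
rewrite (@eq_has3 (fun a b c => like1243 x (bump x a) (bump x b) (bump x c))
  (like132_ge x)); last by move=> *; rewrite /like1243 /like132_ge /bump; lia.
rewrite (@eq_has3 (fun a b c => like1324 x (bump x a) (bump x b) (bump x c))
  (like213_ge x)); last by move=> *; rewrite /like1324 /like213_ge /bump; lia.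
by case: (has4 _ u); case: (has4 _ u); case: (has3 _ u); case: (has3 _ u).
Qed.

Lemma active_prepend_le y x u : y <= x ->
  active y (prepend x u) = [&& active y u, incr_ge x u & high_first y x u].
Proof.
move=> yx; rewrite /active /incr_ge /high_first /= !has3_map !has2_map.
rewrite (@eq_has3 (fun a b c => like132_ge y (bump x a) (bump x b) (bump x c))
  (like132_ge y)); last by move=> *; rewrite /like132_ge /bump; lia.
rewrite (@eq_has3 (fun a b c => like213_ge y (bump x a) (bump x b) (bump x c))
  (like213_ge y)); last by move=> *; rewrite /like213_ge /bump; lia.
rewrite (@eq_has2 (fun b c => like132_ge y x (bump x b) (bump x c))
  (fun a b => x <= b < a)); last by move=> *; rewrite /like132_ge /bump; lia.
rewrite (@eq_has2 (fun b c => like213_ge y x (bump x b) (bump x c))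
  (fun a b => [&& y <= a, a < x & x <= b])); last by move=> *; rewrite /like213_ge /bump; lia.
by case: (has3 _ u); case: (has3 _ u); case: (has2 _ u); case: (has2 _ u).
Qed.

Lemma active_prepend_gt y x u : x < y -> active y (prepend x u) = active y.-1 u.
Proof.
move=> xy; rewrite /active /= !has3_map !has2_map.
rewrite (@eq_has3 (fun a b c => like132_ge y (bump x a) (bump x b) (bump x c))
  (like132_ge y.-1)); last by move=> *; rewrite /like132_ge /bump; lia.
rewrite (@eq_has3 (fun a b c => like213_ge y (bump x a) (bump x b) (bump x c))
  (like213_ge y.-1)); last by move=> *; rewrite /like213_ge /bump; lia.
rewrite (@eq_has2 (fun b c => like132_ge y x (bump x b) (bump x c))
  (fun _ _ => false)); last by move=> *; rewrite /like132_ge /bump; lia.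
rewrite (@eq_has2 (fun b c => like213_ge y x (bump x b) (bump x c))
  (fun _ _ => false)); last by move=> *; rewrite /like213_ge /bump; lia.
by rewrite has2_pred0.
Qed.

Lemma activeW y y' u : y <= y' -> active y u -> active y' u.
Proof.
move=> yy' /andP[no132 no213]; apply/andP; split.
  by apply: contra no132; apply: sub_has3 => a b c; rewrite /like132_ge; lia.
by apply: contra no213; apply: sub_has3 => a b c; rewrite /like213_ge; lia.
Qed.

Lemma incr_geW x x' u : x <= x' -> incr_ge x u -> incr_ge x' u.
Proof. by move=> xx'; apply: contra; apply: sub_has2 => a b; lia. Qed.

Lemma high_firstW y y' x u : y <= y' -> high_first y x u -> high_first y' x u.
Proof. by move=> yy'; apply: contra; apply: sub_has2 => a b; lia. Qed.

Lemma high_first_refl x u : high_first x x u.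
Proof. by apply/negP => /has2P[a [b [_ _]]]; lia. Qed.

Fixpoint perm_words (m : nat) : seq (seq nat) :=
  if m is m'.+1 then [seq prepend x u | x <- iota 0 m'.+1, u <- perm_words m']
  else [:: [::]].

Lemma perm_wordsS m :
  perm_words m.+1 = [seq prepend x u | x <- iota 0 m.+1, u <- perm_words m].
Proof. by []. Qed.

Lemma perm_wordsP m w :
  (w \in perm_words m) = [&& size w == m, uniq w & all (fun v => v < m) w].
Proof.
elim: m w => [|m IH] w; first by rewrite inE; case: w.
rewrite perm_wordsS; apply/allpairsP/idP => [[[x u] [+ + ->]]|].
- rewrite mem_iota IH /= => xm /and3P[/eqP su uu au].
  rewrite /= size_map su eqxx (map_inj_uniq (can_inj (bumpK x))) uu xm /= andbT.
  apply/andP; split; first by apply/mapP => -[v _]; rewrite /bump; lia.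
  by apply/allP => _ /mapP[v /(allP au) vm ->]; rewrite /bump; lia.
case: w => // x u /and3P[/eqP[su] /andP[xu uu] /andP[xm au]].
have unbumpK_u : {in u, cancel (unbump x) (bump x)}.
  by move=> v vu; apply: unbumpK; apply: contraNneq xu => <-.
exists (x, map (unbump x) u); split; first by rewrite mem_iota.
  rewrite IH size_map su eqxx (map_inj_in_uniq (can_in_inj unbumpK_u)).
  apply/and3P; split=> //; apply/allP => _ /mapP[v vu ->].
  have vx : v != x by apply: contraNneq xu => <-.
  by have := allP au v vu; rewrite /unbump; lia.
by rewrite /prepend /= -map_comp map_id_in.
Qed.

Lemma perm_words_uniq m : uniq (perm_words m).
Proof.
elim: m => // m IH; rewrite perm_wordsS allpairs_uniq ?iota_uniq //.
by move=> [x u] [y v] _ _ /= [<-] /(inj_map (can_inj (bumpK x))) ->.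
Qed.

Lemma size_perm_words m : size (perm_words m) = m`!.
Proof. by elim: m => // m IH; rewrite perm_wordsS size_allpairs size_iota IH. Qed.

Lemma descent_at_pred x u : incr_ge x u -> ~~ incr_ge x.-1 u ->
  exists c d, [/\ c < d, d < size u, nth 0 u d = x.-1 & x <= nth 0 u c].
Proof.
move=> incr /negbNE /has2P[c [d [cd du /andP[le_d lt_dc]]]].
have ed : nth 0 u d = x.-1.
  apply/eqP; rewrite eqn_leq le_d andbT leqNgt; apply: contra incr => lt_d.
  by apply/has2P; exists c, d; split => //; lia.
by exists c, d; split => //; lia.
Qed.

Lemma high_first_of_active u y x : uniq u -> active y u -> incr_ge x u ->
  ~~ incr_ge x.-1 u -> y <= x -> high_first y x u.
Proof.
move=> uu /andP[no132 no213] incr /(descent_at_pred incr)[c [d [cd du ud xc]]] yx.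
have cu : c < size u by apply: ltn_trans cd du.
apply/has2P => -[a [b [ab bu /and3P[ya ax xb]]]].
have au : a < size u by apply: ltn_trans ab bu.
(* With the descent (c, d) onto x.-1, a violating pair (a, b) yields a 132
   if a < c, and a 213 or a descent among the entries >= x if c < a. *)
have [ac|ca|eq_ac] := ltngtP a c; last by move: ax; rewrite eq_ac; lia.
- have ad : nth 0 u a != nth 0 u d by rewrite nth_uniq //; lia.
  case/negP: no132; apply/has3P; exists a, c, d; split => //.
  by rewrite /like132_ge; lia.
- have cb : nth 0 u c != nth 0 u b by rewrite nth_uniq //; lia.
  have [lt_cb|lt_bc|/eqP] := ltngtP (nth 0 u c) (nth 0 u b); last by rewrite (negbTE cb).
    case/negP: no213; apply/has3P; exists c, a, b; split => //.
    by rewrite /like213_ge; lia.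
  by case/negP: incr; apply/has2P; exists c, b; split => //; lia.
Qed.

(** * The generating tree *)

Definition nactive (u : seq nat) : nat := count (active^~ u) (iota 1 (size u).-1).

Definition incr_threshold (u : seq nat) : nat :=
  size u - count (incr_ge^~ u) (iota 0 (size u)).

Definition all_active (w : seq nat) : bool := av w && active 0 w.

Lemma all_active_prepend x u :
  all_active (prepend x u) = [&& all_active u, incr_ge x u & high_first 0 x u].
Proof.
rewrite /all_active av_prepend active_prepend_le //.
by case act0: (active 0 u); rewrite ?andbF // (activeW _ act0) ?andbT.
Qed.

Definition av_min_before_max (w : seq nat) : bool :=
  av w && (index 0 w < index (size w).-1 w).

(* The number of nodes at depth L below a node of label k, in the generating
   tree with rule (k) -> (2) (3) ... (k + 1). *)
Fixpoint tree_level (L k : nat) : nat :=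
  if L is L'.+1 then \sum_(2 <= k' < k.+2) tree_level L' k' else 1.

Section PermWord.
Variables (m : nat) (u : seq nat).
Hypothesis u_perm : u \in perm_words m.

Lemma size_perm_word : size u = m.
Proof. by move: u_perm; rewrite perm_wordsP => /and3P[/eqP]. Qed.

Lemma perm_word_uniq : uniq u.
Proof. by move: u_perm; rewrite perm_wordsP => /and3P[]. Qed.

Lemma nth_perm_word_lt i : i < size u -> nth 0 u i < m.
Proof.
move=> iu; move: u_perm; rewrite perm_wordsP => /and3P[_ _ /allP]; apply.
exact: mem_nth.
Qed.

Lemma mem_perm_word v : (v \in u) = (v < m).
Proof.
case: (@uniq_min_size _ u (iota 0 m) perm_word_uniq) => [||_ /(_ v)].
- by move=> _ /(nthP 0)[i iu <-]; rewrite mem_iota nth_perm_word_lt.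
- by rewrite size_iota size_perm_word.
by rewrite mem_iota.
Qed.

Lemma incr_ge_max : incr_ge m.-1 u.
Proof.
apply/has2P => -[a [b [ab bu]]].
by have := nth_perm_word_lt (ltn_trans ab bu); have := nth_perm_word_lt bu; lia.
Qed.

Lemma high_first_max y : high_first y m u.
Proof. by apply/has2P => -[a [b [_ bu]]]; have := nth_perm_word_lt bu; lia. Qed.

Lemma active_max : active m u.
Proof.
apply/andP; split; apply/has3P => -[a [b [c [ab bc cu]]]].
  have := nth_perm_word_lt (ltn_trans bc cu).
  by have := nth_perm_word_lt (ltn_trans ab (ltn_trans bc cu)); rewrite /like132_ge; lia.
have := nth_perm_word_lt (ltn_trans bc cu).
by have := nth_perm_word_lt cu; rewrite /like213_ge; lia.
Qed.

(* The entries >= x.-1 increase, so x.-1 precedes the maximum m.-1. *)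
Lemma high_first_pred x : 0 < x < m -> incr_ge x.-1 u -> ~~ high_first x.-1 x u.
Proof.
move=> /andP[x0 xm] incr; rewrite negbK.
have u_pred : x.-1 \in u by rewrite mem_perm_word; lia.
have u_max : m.-1 \in u by rewrite mem_perm_word; lia.
have [ij|ji|eq_ij] := ltngtP (index x.-1 u) (index m.-1 u).
- apply/has2P; exists (index x.-1 u), (index m.-1 u).
  by rewrite !nth_index // index_mem; split => //; lia.
- case/negP: incr; apply/has2P; exists (index m.-1 u), (index x.-1 u).
  by rewrite !nth_index // index_mem; split => //; lia.
by have := congr1 (nth 0 u) eq_ij; rewrite !nth_index //; lia.
Qed.

Lemma high_firstE y x : active y u -> incr_ge x u -> y <= x < m ->
  high_first y x u = (y == x) || ~~ incr_ge x.-1 u.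
Proof.
move=> act incr /andP[yx xm].
have [->|neq_yx] := eqVneq y x; first exact: high_first_refl.
case: (boolP (incr_ge x.-1 u)) => [incr_pred|not_incr]; last first.
  exact: high_first_of_active perm_word_uniq act incr not_incr yx.
have x_range : 0 < x < m by lia.
by apply: contraNF (high_first_pred x_range incr_pred); apply: high_firstW; lia.
Qed.

Lemma nactive_le : nactive u <= m.-1.
Proof. by rewrite /nactive -size_perm_word (leq_trans (count_size _ _)) ?size_iota. Qed.

Lemma activeE y : 0 < y <= m -> active y u = (m - nactive u <= y).
Proof.
move=> /andP[y0 ym]; have := nactive_le.
have [-> | neq_ym] := eqVneq y m; first by rewrite active_max; lia.
rewrite /nactive size_perm_word (@upclosedE (active^~ u) 1 m.-1 _ y).
- by have -> : 1 + m.-1 = m by lia.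
- by move=> z _; apply: activeW.
- lia.
Qed.

Lemma incr_geE x : x < m -> incr_ge x u = (incr_threshold u <= x).
Proof.
move=> xm; rewrite /incr_threshold size_perm_word (@upclosedE (incr_ge^~ u) 0 m _ x) //.
by move=> z _; apply: incr_geW.
Qed.

Lemma incr_threshold_lt : 0 < m -> incr_threshold u < m.
Proof. by move=> m0; have := incr_geE (x := m.-1); rewrite incr_ge_max; lia. Qed.

Lemma nactive_prepend_min : all_active u -> nactive (prepend 0 u) = m.
Proof.
move=> /andP[_ act0]; rewrite /nactive /= size_map size_perm_word.
rewrite (eq_in_count (a2 := predT)) ?count_predT ?size_iota // => y.
by rewrite mem_iota => /andP[y1 _]; rewrite active_prepend_gt //; apply: activeW act0.
Qed.

Lemma nactive_prepend x : active x u -> 0 < x < m ->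
  nactive (prepend x u) =
    if ~~ incr_ge x u then m - x
    else if incr_ge x.-1 u then (m - x).+1 else (nactive u).+1.
Proof.
move=> act /andP[x0 xm]; rewrite {1}/nactive /= size_map size_perm_word.
have -> : iota 1 m = iota 1 x ++ iota x.+1 (m - x) by rewrite -iotaD; congr iota; lia.
rewrite count_cat; have -> : count (active^~ (prepend x u)) (iota x.+1 (m - x)) = m - x.
  rewrite (eq_in_count (a2 := predT)) ?count_predT ?size_iota // => y.
  by rewrite mem_iota => /andP[xy _]; rewrite active_prepend_gt //; apply: activeW act; lia.
rewrite (eq_in_count (a1 := active^~ _)
  (a2 := fun y => [&& active y u, incr_ge x u & high_first y x u])); last first.
  by move=> y; rewrite mem_iota => /andP[_ yx]; rewrite active_prepend_le //; lia.
case: (boolP (incr_ge x u)) => [incr|_] /=; last first.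
  by rewrite (eq_count (a2 := pred0)) ?count_pred0 // => y; rewrite andbF.
rewrite (eq_in_count (a2 := fun y => active y u && ((y == x) || ~~ incr_ge x.-1 u))).
  case: (boolP (incr_ge x.-1 u)) => [_|_] /=.
    rewrite (eq_count (a2 := pred1 x)) => [|y]; last first.
      by rewrite orbF /=; case: eqVneq => [->|]; rewrite ?act ?andbF.
    by rewrite count_uniq_mem ?iota_uniq // mem_iota; lia.
  rewrite (eq_in_count (a2 := fun y => m - nactive u <= y)) => [|y]; last first.
    by rewrite mem_iota orbT andbT => y_range; rewrite activeE; lia.
  have := nactive_le; have := activeE (y := x); rewrite act.
  by rewrite -size_filter filter_iota_geq size_iota; lia.
move=> y; rewrite mem_iota => /andP[y1 yx].
by case act_y: (active y u); rewrite //= high_firstE //; lia.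
Qed.

Lemma sum_active_children (F : nat -> nat) : 0 < m ->
  \sum_(x <- iota 1 m.-1 | active x u) F (nactive (prepend x u)) =
  \sum_(2 <= k < (nactive u).+2) F k.
Proof.
move=> m0; have := nactive_le; have := incr_threshold_lt m0.
set lam := nactive u; set xi := incr_threshold u => xi_lt lam_le.
have active_sites : [seq x <- iota 1 m.-1 | active x u] = iota (m - lam) lam.
  rewrite (eq_in_filter (a2 := fun x => m - lam <= x)) => [|x]; last first.
    by rewrite mem_iota => x_range; rewrite activeE; lia.
  by rewrite filter_iota_geq; congr iota; lia.
pose label x := if x < xi then m - x else if xi <= x.-1 then (m - x).+1 else lam.+1.
rewrite -big_filter active_sites (eq_big_seq (fun x => F (label x))) => [|x]; last first.
  rewrite mem_iota => x_range; have act : active x u by rewrite activeE; lia.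
  rewrite /= nactive_prepend // ?incr_geE -?ltnNge //; lia.
rewrite /index_iota !subSS subn0.
(* [label] maps the active sites m - lam, ..., m - 1 one-to-one onto 2, ..., lam + 1. *)
apply: big_iota_inj => [x y | x]; rewrite ?mem_iota /label.
  case: (ltnP x xi) (ltnP y xi) (leqP xi x.-1) (leqP xi y.-1) => ? [] ? [] ? [] ?; lia.
by case: (ltnP x xi) (leqP xi x.-1) => ? [] ?; lia.
Qed.

Lemma count_all_active_children : 0 < m -> all_active u ->
  count (fun x => incr_ge x u && high_first 0 x u) (iota 0 m.+1) = 2.
Proof.
move=> m0 /andP[_ act0]; have xi_lt := incr_threshold_lt m0.
rewrite (eq_in_count (a2 := fun x => (x == incr_threshold u) || (x == m))) => [|x]; last first.
  rewrite mem_iota add0n ltnS => /andP[_ xm].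
  have [-> | neq_xm] := eqVneq x m.
    by rewrite orbT high_first_max (incr_geW _ incr_ge_max) //; lia.
  have incr_x : incr_ge x u = (incr_threshold u <= x) by rewrite incr_geE; lia.
  rewrite orbF incr_x; case: leqP => [le_xi | lt_x] /=; last by lia.
  by rewrite high_firstE ?incr_x ?incr_geE //; lia.
rewrite -addn1 iotaD count_cat /= eqxx orbT.
rewrite (eq_in_count (a2 := pred1 (incr_threshold u))) => [|x]; last first.
  by rewrite mem_iota /=; case: (x == incr_threshold u) => //=; lia.
by rewrite count_uniq_mem ?iota_uniq // mem_iota; lia.
Qed.

Lemma av_min_before_max_prepend_min :
  0 < m -> av_min_before_max (prepend 0 u) = all_active u.
Proof.
move=> m0; rewrite /av_min_before_max /all_active av_prepend /= size_map size_perm_word.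
have -> : (0 == m) = false by lia.
by rewrite andbT.
Qed.

Lemma av_min_before_max_prepend_max : 0 < m -> av_min_before_max (prepend m u) = false.
Proof.
by move=> m0; rewrite /av_min_before_max /= size_map size_perm_word eqxx ltn0 andbF.
Qed.

Lemma av_min_before_max_prepend x : 0 < x < m ->
  av_min_before_max (prepend x u) = av_min_before_max u && active x u.
Proof.
move=> /andP[x0 xm]; rewrite /av_min_before_max av_prepend /= size_map size_perm_word.
have [-> ->] : (x == 0) = false /\ (x == m) = false by split; lia.
have index_bump v : index (bump x v) (map (bump x) u) = index v u.
  exact/index_map/(can_inj (bumpK x)).
have [bump_min bump_max] : bump x 0 = 0 /\ bump x m.-1 = m by rewrite /bump; lia.
by rewrite -{1}bump_min -{1}bump_max !index_bump ltnS andbAC.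
Qed.

Lemma children_weight L : 0 < m ->
  \sum_(x <- iota 0 m.+1 | av_min_before_max (prepend x u))
      tree_level L (nactive (prepend x u)) =
  all_active u * tree_level L m + av_min_before_max u * tree_level L.+1 (nactive u).
Proof.
move=> m0.
have -> : iota 0 m.+1 = 0 :: iota 1 m.-1 ++ [:: m].
  by rewrite -addn1 iotaD -[in iota 0 m](prednK m0).
rewrite big_cons big_cat big_cons big_nil av_min_before_max_prepend_min //.
rewrite av_min_before_max_prepend_max //= addn0.
have mid : \sum_(x <- iota 1 m.-1 | av_min_before_max (prepend x u))
    tree_level L (nactive (prepend x u)) =
    av_min_before_max u * tree_level L.+1 (nactive u).
  rewrite -big_filter; case: (boolP (av_min_before_max u)) => [mbm | not_mbm].
    rewrite (eq_in_filter (a2 := active^~ u)) => [|x]; last first.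
      by rewrite mem_iota => x_range; rewrite av_min_before_max_prepend ?mbm //; lia.
    by rewrite big_filter sum_active_children // mul1n.
  rewrite (eq_in_filter (a2 := pred0)) ?filter_pred0 ?big_nil // => x.
  by rewrite mem_iota => x_range; rewrite av_min_before_max_prepend ?(negbTE not_mbm) //; lia.
rewrite mid; case: (boolP (all_active u)) => [all_act | _]; last by rewrite mul0n.
by rewrite nactive_prepend_min // mul1n.
Qed.

End PermWord.

Lemma count_all_active m : 0 < m -> count all_active (perm_words m) = 2 ^ m.-1.
Proof.
elim: m => [//|m IH] _; case: m IH => [//|m] IH.
rewrite expnS -IH // -!sum1_count big_distrr perm_wordsS.
rewrite [LHS]big_mkcond big_allpairs_dep exchange_big [RHS]big_mkcond.
apply: eq_big_seq => u u_perm; rewrite -big_mkcond sum1_count.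
rewrite (eq_count (a2 := fun x => all_active u && (incr_ge x u && high_first 0 x u)));
  last by move=> x; rewrite all_active_prepend.
case: (boolP (all_active u)) => [all_act | _]; last exact: count_pred0.
exact: count_all_active_children u_perm _ all_act.
Qed.

(** * Counting the levels *)

Definition class_weight (m L : nat) : nat :=
  \sum_(w <- perm_words m | av_min_before_max w) tree_level L (nactive w).

Lemma class_weightS m L : 0 < m ->
  class_weight m.+1 L = 2 ^ m.-1 * tree_level L m + class_weight m L.+1.
Proof.
move=> m0.
have weight_next : \sum_(u <- perm_words m) av_min_before_max u * tree_level L.+1 (nactive u)
    = class_weight m L.+1.
  rewrite /class_weight [RHS]big_mkcond; apply: eq_bigr => u _.
  by case: (av_min_before_max u); rewrite ?mul1n.
rewrite /class_weight perm_wordsS big_mkcond big_allpairs_dep exchange_big.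
under eq_big_seq => u u_perm do rewrite -big_mkcond (children_weight u_perm _ m0).
by rewrite big_split -big_distrl sum_b2n count_all_active // weight_next.
Qed.

Lemma class_weight1 L : class_weight 1 L = 0.
Proof. by rewrite /class_weight /= big_cons big_nil. Qed.

Lemma class_weight_closed r L :
  class_weight r.+1 L = \sum_(i < r) 2 ^ i * tree_level (L + r - i.+1) i.+1.
Proof.
elim: r L => [|r IH] L; first by rewrite class_weight1 big_ord0.
rewrite class_weightS // IH big_ord_recr /= addnC; congr (_ + _).
  by apply: eq_bigr => i _; congr (_ * tree_level _ _); lia.
by congr (_ * tree_level _ _); lia.
Qed.

Lemma tree_level1 k : tree_level 1 k = k.
Proof. by rewrite /= sum_nat_const_nat muln1; lia. Qed.

Lemma tree_level_label1 L : tree_level L.+1 1 = tree_level L 2.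
Proof. by rewrite /= big_nat1. Qed.

Lemma tree_level_labelS L k : tree_level L.+1 k.+1 = tree_level L.+1 k + tree_level L k.+2.
Proof. by rewrite /= big_nat_recr //=; lia. Qed.

Lemma tree_level_binom L k : 0 < k ->
  tree_level L.+1 k + 'C(L.*2 + k.+1, L) = 'C(L.*2 + k.+1, L.+1).
Proof.
elim: L k => [|L IHL] k k0; first by rewrite tree_level1 bin0 bin1; lia.
elim: k k0 => [//|[|k] IHk] _.
  have := IHL 2 isT; rewrite tree_level_label1.
  have -> : L.+1.*2 + 2 = (L.*2 + 3).+1 by rewrite doubleS; lia.
  have sym : 'C(L.*2 + 3, L.+2) = 'C(L.*2 + 3, L.+1).
    by rewrite -bin_sub; [congr 'C(_, _) | ]; lia.
  by rewrite !binS sym; lia.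
rewrite tree_level_labelS; have := IHL k.+3 isT; have := IHk isT.
have -> : L.+1.*2 + k.+3 = (L.*2 + k.+4).+1 by rewrite doubleS; lia.
have -> : L.+1.*2 + k.+2 = L.*2 + k.+4 by rewrite doubleS; lia.
by rewrite !binS; lia.
Qed.

Definition pow2_tree_sum (r d : nat) : nat :=
  \sum_(i < r) 2 ^ i * tree_level (r - i.+1) (d + i).

Lemma pow2_tree_sumS r d : pow2_tree_sum r.+1 d = tree_level r d + 2 * pow2_tree_sum r d.+1.
Proof.
rewrite /pow2_tree_sum big_ord_recl /= expn0 mul1n subn1 addn0 big_distrr.
by congr (_ + _); apply: eq_bigr => i _; rewrite /bump /= expnS mulnA addnS addSn subSS.
Qed.

Lemma pow2_tree_sum_binom r d : 0 < d -> pow2_tree_sum r.+1 d = 'C(r.*2 + d, r).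
Proof.
elim: r d => [|r IH] d d0; first by rewrite pow2_tree_sumS /pow2_tree_sum big_ord0 bin0.
rewrite pow2_tree_sumS IH //; have := tree_level_binom r d0.
have -> : r.+1.*2 + d = (r.*2 + d.+1).+1 by rewrite doubleS; lia.
by rewrite binS addnS; lia.
Qed.

(** * From permutations to words *)

Definition order_iso (p q : seq nat) : bool :=
  all (fun i => all (fun j => (nth 0 q i < nth 0 q j) == (nth 0 p i < nth 0 p j))
                    (iota 0 (size p))) (iota 0 (size p)).

Section Words.
Variable k : nat.
Local Notation n := k.+1.

Definition word_of (s : {perm 'I_n}) : seq nat := [seq val (s i) | i <- enum 'I_n].

Lemma nth_word_of s (i : 'I_n) : nth 0 (word_of s) i = s i.
Proof. by rewrite /word_of (nth_map ord0) ?size_enum_ord // nth_ord_enum. Qed.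

Lemma nth_word_of_inord s i : i < n -> nth 0 (word_of s) i = s (inord i).
Proof. by move=> i_lt; rewrite -nth_word_of inordK. Qed.

Lemma word_of_inj : injective word_of.
Proof.
move=> s t st; apply/permP => i; apply/val_inj.
by have := congr1 (nth 0 ^~ i) st; rewrite /= !nth_word_of.
Qed.

Lemma word_of_perm_words s : word_of s \in perm_words n.
Proof.
rewrite perm_wordsP size_map size_enum_ord eqxx /= map_inj_uniq ?enum_uniq.
  by apply/allP => _ /mapP[i _ ->]; rewrite ltn_ord.
by move=> i j /val_inj; apply: perm_inj.
Qed.

Lemma pos_index s (v : 'I_n) : pos s v = index (val v) (word_of s).
Proof.
rewrite /pos -{2}(permKV s v) /word_of (index_map (f := fun i => val (s i))).
  by rewrite index_enum_ord.
by move=> i j /val_inj /perm_inj.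
Qed.

Lemma contains_pat4 s (p0 p1 p2 p3 : nat) :
  contains_pat s [:: p0; p1; p2; p3] =
  has4 (fun a b c d => order_iso [:: p0; p1; p2; p3] [:: a; b; c; d]) (word_of s).
Proof.
set p := [:: p0; p1; p2; p3].
apply/existsP/has4P => [[f /forallP f_ok] | [a [b [c [d [ab bc cd dn iso]]]]]].
  have f_okE i j : i < 4 -> j < 4 -> ((i < j) ==> (f (inord i) < f (inord j))) &&
      ((s (f (inord i)) < s (f (inord j))) == (nth 0 p i < nth 0 p j)).
    by move=> i4 j4; have := forallP (f_ok (inord i)) (inord j); rewrite !inordK.
  have f_mono i : i < 3 -> f (inord i) < f (inord i.+1).
    by move=> i3; case/andP: (f_okE i i.+1 (leqW i3) i3); rewrite ltnSn.
  exists (f (inord 0)), (f (inord 1)), (f (inord 2)), (f (inord 3)).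
  rewrite size_map size_enum_ord !nth_word_of ltn_ord.
  split; [exact: f_mono | exact: f_mono | exact: f_mono | done | ].
  apply/allP => i; rewrite mem_iota => /andP[_ i4].
  apply/allP => j; rewrite mem_iota => /andP[_ j4].
  case/andP: (f_okE i j i4 j4) => _ /eqP <-.
  by case: i i4 => [|[|[|[|i]]]] //; case: j j4 => [|[|[|[|j]]]].
rewrite size_map size_enum_ord in dn.
have [an bn cn] : [/\ a < n, b < n & c < n] by split; lia.
exists [ffun i : 'I_4 => inord (nth 0 [:: a; b; c; d] i)].
apply/forallP => i; apply/forallP => j; rewrite !ffunE.
have := allP iso i; rewrite mem_iota ltn_ord => /(_ isT) /allP /(_ j).
rewrite mem_iota ltn_ord => /(_ isT) /eqP <-.
rewrite !nth_word_of_inord //.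
case: i => [[|[|[|[|i]]]] i4] //; case: j => [[|[|[|[|j]]]] j4] //=;
  rewrite ?inordK // eqxx andbT //; lia.
Qed.

Lemma perm_eq_word_of : perm_eq (map word_of (index_enum {perm 'I_n})) (perm_words n).
Proof.
have words_uniq : uniq (map word_of (index_enum {perm 'I_n})).
  by rewrite map_inj_uniq ?index_enum_uniq //; apply: word_of_inj.
apply: uniq_perm; rewrite ?perm_words_uniq //.
case: (uniq_min_size words_uniq (s2 := perm_words n)) => [_ /mapP[s _ ->]||//].
  exact: word_of_perm_words.
by rewrite size_map size_perm_words [index_enum _]unlock -enumT -cardT card_Sn.
Qed.

End Words.

Lemma order_iso_1243 a b c d : order_iso [:: 1; 2; 4; 3] [:: a; b; c; d] = like1243 a b c d.
Proof. by rewrite /order_iso /like1243 /= !eqb_id !eqbF_neg; apply/idP/idP; lia. Qed.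

Lemma order_iso_1324 a b c d : order_iso [:: 1; 3; 2; 4] [:: a; b; c; d] = like1324 a b c d.
Proof. by rewrite /order_iso /like1324 /= !eqb_id !eqbF_neg; apply/idP/idP; lia. Qed.

Lemma card_av_min_before_max k :
  #|[set s : {perm 'I_k.+1} | avoids s [:: 1; 2; 4; 3] && avoids s [:: 1; 3; 2; 4]
      && (pos s ord0 < pos s ord_max)]| = count av_min_before_max (perm_words k.+1).
Proof.
rewrite -sum1dep_card (eq_bigl (av_min_before_max \o word_of (k := k))) => [|s]; last first.
  rewrite /avoids !contains_pat4 !pos_index /= /av_min_before_max /av.
  rewrite (eq_has4 _ order_iso_1243) (eq_has4 _ order_iso_1324).
  by rewrite size_map size_enum_ord.
by rewrite sum1_count -count_map; move/seq.permP: (perm_eq_word_of k) => ->.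
Qed.

Lemma count_av_min_before_max r :
  count av_min_before_max (perm_words r.+2) = 'C(r.*2 + 1, r).
Proof.
have -> : count av_min_before_max (perm_words r.+2) = class_weight r.+2 0.
  by rewrite -sum1_count.
rewrite class_weight_closed -(pow2_tree_sum_binom r (isT : 0 < 1)).
by apply: eq_bigr => i _; rewrite add0n add1n.
Qed.

Theorem corollary5p8 (n : nat) (hn : (2 <= n)%N) :
  #|[set s : {perm 'I_n.-1.+1} |
      avoids s [:: 1; 2; 4; 3] && avoids s [:: 1; 3; 2; 4]
      && (pos s ord0 < pos s ord_max)%N]| = 'C(2 * n - 3, n - 1).
Proof.
case: n hn => [|[|r]] // _.
rewrite card_av_min_before_max count_av_min_before_max -bin_sub; last lia.
by congr 'C(_, _); lia.
Qed.
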